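(* Let $(X,\sigma,T)$ be as in the context, $x\in eX$, $\xi\in X_{eq}$ and $f_1,f_2\in L$. (1) If $\xi$ is regular, then $(f_1,f_2)\in R^{\xi-\pi_{eq}(x)}_{\mathrm{ev}_x}$ if and only if $(ef_1)^{-1}f_2\in\mathrm{stab}_{\mathcal G}(x)$ and $\tilde\pi_{eq}(f_1)=\tilde\pi_{eq}(f_2)=\xi-\pi_{eq}(x)$. (2) If every point of $\pi_{eq}^{-1}(\xi)$ separates the idempotents of $L$, then $(f_1,f_2)\in R^{\xi-\pi_{eq}(x)}_{\mathrm{ev}_x}$ if and only if $(ef_1)^{-1}f_2\in\mathrm{stab}_{\mathcal G}(x)$, $f_1^0=f_2^0$ and $\tilde\pi_{eq}(f_1)=\tilde\pi_{eq}(f_2)=\xi-\pi_{eq}(x)$.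
   Context: $T$ abelian group acting continuously, minimally and non-distally by $\sigma$ on a compact Hausdorff space $X$. $E(X)$: Ellis semigroup (closure of $\{\sigma^t\}$ in $X^X$). $\pi_{eq}:X\to X_{eq}$: maximal equicontinuous factor ($X_{eq}$ a compact abelian group). Points $x,y$ are proximal if $f(x)=f(y)$ for some $f\in E(X)$; $\xi\in X_{eq}$ is singular if $\pi_{eq}^{-1}(\xi)$ contains two distinct proximal points, regular otherwise. Fix a minimal idempotent $e$, $L=E(X)e$, $\mathcal G=eL$ (a group with identity $e$; $g^{-1}$ denotes the group inverse), $\mathrm{stab}_{\mathcal G}(x)=\{g\in\mathcal G: g(x)=x\}$. For $f\in L$, $f^{-1}$ is its unique normal inverse in the completely simple semigroup $L$ and $f^0=f^{-1}f$. A point separates the idempotents of $L$ if evaluation at it is injective on the set of idempotents of $L$. $\tilde\pi_{eq}(f)=\pi_{eq}(f(y))-\pi_{eq}(y)$ (independent of $y$). $R^\zeta_{\mathrm{ev}_x}=\{(f_1,f_2)\in L\times L: f_1(x)=f_2(x),\ \tilde\pi_{eq}(f_i)=\zeta,\ i=1,2\}$. *)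

From HB Require Import structures.
From mathcomp Require Import all_boot all_order all_algebra.
From mathcomp Require Import all_classical all_reals all_analysis.
From Stdlib Require Import ClassicalEpsilon.
Import Order.TTheory GRing.Theory Num.Theory.

Set Implicit Arguments.
Unset Strict Implicit.
Unset Printing Implicit Defensive.

Local Open Scope classical_set_scope.
Local Open Scope ring_scope.

Definition is_action (T : zmodType) (X : Type) (s : T -> X -> X) : Prop :=
  (forall x, s 0 x = x) /\ (forall t u x, s (t + u) x = s t (s u x)).

Definition continuous_action (T : zmodType) (X : topologicalType)
    (s : T -> X -> X) : Prop :=
  is_action s /\ (forall t, continuous (s t)).

Definition minimal_action (T : zmodType) (X : topologicalType)
    (s : T -> X -> X) : Prop :=
  forall x : X, closure (range (fun t => s t x)) = [set: X].

Definition ellis (T : zmodType) (X : topologicalType) (s : T -> X -> X)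
    : set (X -> X) :=
  @closure {ptws X -> X} (range s).

Definition proximal (T : zmodType) (X : topologicalType) (s : T -> X -> X)
    (x y : X) : Prop :=
  exists f, ellis s f /\ f x = f y.

Definition non_distal (T : zmodType) (X : topologicalType) (s : T -> X -> X)
    : Prop :=
  exists x y : X, x <> y /\ proximal s x y.

Definition left_ideal (X : Type) (E I : set (X -> X)) : Prop :=
  I !=set0 /\ I `<=` E /\ (forall f g, E f -> I g -> I (f \o g)).

Definition minimal_left_ideal (X : Type) (E I : set (X -> X)) : Prop :=
  left_ideal E I /\ (forall J, left_ideal E J -> J `<=` I -> J = I).

Definition minimal_idempotent (X : Type) (E : set (X -> X)) (e : X -> X)
    : Prop :=
  E e /\ e \o e = e /\ (exists I, minimal_left_ideal E I /\ I e).

Definition Lset (X : Type) (E : set (X -> X)) (e : X -> X) : set (X -> X) :=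
  [set f \o e | f in E].

Definition Gset (X : Type) (E : set (X -> X)) (e : X -> X) : set (X -> X) :=
  [set e \o f | f in Lset E e].

Definition ginv (X : Type) (G : set (X -> X)) (e g : X -> X) : X -> X :=
  epsilon (inhabits g) (fun h => G h /\ h \o g = e /\ g \o h = e).

(** the (unique) normal inverse of f in the completely simple semigroup L,
    i.e. the inverse of f in the maximal subgroup of L containing f *)
Definition ninv (X : Type) (L : set (X -> X)) (f : X -> X) : X -> X :=
  epsilon (inhabits f)
    (fun g => L g /\ f \o g \o f = f /\ g \o f \o g = g /\ f \o g = g \o f).

Definition nzero (X : Type) (L : set (X -> X)) (f : X -> X) : X -> X :=
  ninv L f \o f.

Definition stab (X : Type) (G : set (X -> X)) (x : X) : set (X -> X) :=
  [set g | G g /\ g x = x].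

Definition equicontinuous_action (T : zmodType) (Y : uniformType)
    (tau : T -> Y -> Y) : Prop :=
  forall A, entourage A ->
    exists2 B, entourage B & forall t y z, B (y, z) -> A (tau t y, tau t z).

Definition factor_map (T : zmodType) (X Y : topologicalType)
    (s : T -> X -> X) (tau : T -> Y -> Y) (p : X -> Y) : Prop :=
  continuous p /\ (forall y, exists x, p x = y) /\
  (forall t x, p (s t x) = tau t (p x)).

Definition max_eq_factor (T : zmodType) (X : topologicalType)
    (s : T -> X -> X) (Xeq : topologicalZmodType) (pi : X -> Xeq) : Prop :=
  hausdorff_space Xeq /\ compact [set: Xeq] /\
  (exists chi : T -> Xeq, factor_map s (fun t z => z + chi t) pi) /\
  (forall (Y : uniformType) (tau : T -> Y -> Y) (p : X -> Y),
      hausdorff_space Y -> compact [set: Y] -> continuous_action tau ->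
      equicontinuous_action tau -> factor_map s tau p ->
      exists q : Xeq -> Y, continuous q /\ (forall x, p x = q (pi x))).

(** pi~(f) = pi(f y) - pi(y), independent of y. *)
Definition pitilde (X : Type) (Xeq : zmodType) (pi : X -> Xeq) (f : X -> X)
    : Xeq :=
  epsilon (inhabits (0 : Xeq)) (fun z => forall y, pi (f y) - pi y = z).

Definition regular_point (T : zmodType) (X : topologicalType)
    (s : T -> X -> X) (Xeq : zmodType) (pi : X -> Xeq) (xi : Xeq) : Prop :=
  ~ (exists y z : X, pi y = xi /\ pi z = xi /\ y <> z /\ proximal s y z).

Definition separates_idempotents (X : Type) (L : set (X -> X)) (y : X)
    : Prop :=
  forall u v, L u -> L v -> u \o u = u -> v \o v = v -> u y = v y -> u = v.

Definition Rev (X : Type) (Xeq : zmodType) (pi : X -> Xeq) (L : set (X -> X))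
    (x : X) (zeta : Xeq) : set ((X -> X) * (X -> X)) :=
  [set ff | L ff.1 /\ L ff.2 /\ ff.1 x = ff.2 x /\
            pitilde pi ff.1 = zeta /\ pitilde pi ff.2 = zeta].

(** Everything happens in the minimal left ideal [I] containing [e], which
    is [L = E e]: idempotents of [I] are right units of [I], and [G = e I] is
    a group. For [f1, f2] in [L], the element [(e f1)^-1 f2] of [G] fixes
    [x = e x] exactly when [e (f1 x) = e (f2 x)], i.e. when [f1 x] and [f2 x]
    are proximal via [e]. The displacement [pi (f y) - pi y] is constant on
    the closure of the rotations [s t], so [f1 x] and [f2 x] lie in the fibre
    over [xi]; if [xi] is regular, proximality then forces [f1 x = f2 x].
    Under the separation hypothesis, [f1 x = f2 x] holds iff moreover the
    idempotents [f1^0] and [f2^0], which fix [f1 x] and [f2 x], coincide: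
    separation at [f1 x] gives one direction, and [f2^0 e = f2^0] the other. *)

From HB Require Import structures.
From mathcomp Require Import all_boot all_order all_algebra.
From mathcomp Require Import all_classical all_reals all_analysis.
From Stdlib Require Import ClassicalEpsilon.
Import Order.TTheory GRing.Theory Num.Theory.
Local Open Scope classical_set_scope.
Local Open Scope ring_scope.

Set Implicit Arguments.
Unset Strict Implicit.
Unset Printing Implicit Defensive.

Section MinimalLeftIdeal.
Variables (X : Type) (E I : set (X -> X)).
Hypothesis minI : minimal_left_ideal E I.

Lemma minimal_ideal_sub : I `<=` E.
Proof. by case: minI => -[_ []]. Qed.

Lemma minimal_ideal_comp f a : E f -> I a -> I (f \o a).
Proof. by case: minI => -[_ [_ h]] _; apply: h. Qed.

Lemma minimal_ideal_compI a b : I a -> I b -> I (a \o b).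
Proof. by move=> /minimal_ideal_sub; apply: minimal_ideal_comp. Qed.

Lemma minimal_ideal_idem_rid v a : I v -> v \o v = v -> I a -> a \o v = a.
Proof.
move=> Iv vv Ia.
suff IJ : I = [set b | I b /\ b \o v = b] by move: Ia; rewrite IJ => -[].
apply/esym/minI.2 => [|b []//]; split; first by exists v.
split=> [b [/minimal_ideal_sub]//|f b Ef [Ib bv]].
by split; [exact: minimal_ideal_comp | rewrite -compA bv].
Qed.

Lemma minimal_ideal_solve g u : I g -> I u -> exists2 h, I h & h \o g = u.
Proof.
move=> Ig Iu.
have: [set h \o g | h in I] u.
  suff -> : [set h \o g | h in I] = I by [].
  apply: minI.2 => [|_ [h Ih <-]]; last exact: minimal_ideal_compI.
  split; first by exists (g \o g); exists g.
  split=> [_ [h Ih <-]|f _ Ef [h Ih <-]].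
    exact/minimal_ideal_sub/minimal_ideal_compI.
  by exists (f \o h) => //; apply: minimal_ideal_comp.
by case=> h Ih hg; exists h.
Qed.

(* With [k = u h] and [h g = u], [g k] is an idempotent of [u I]; since
   idempotents of [I] are right units, the only idempotent of [u I] is [u]. *)
Lemma idem_group_inverse u g : I u -> u \o u = u -> I g -> u \o g = g ->
  exists k, [/\ I k, u \o k = k, k \o g = u & g \o k = u].
Proof.
move=> Iu uu Ig ug.
have [h Ih hg] := minimal_ideal_solve Ig Iu.
have Iuh : I (u \o h) by exact: minimal_ideal_compI.
have kg : (u \o h) \o g = u by rewrite -compA hg.
exists (u \o h); split => //; first by rewrite compA uu.
have Igk : I (g \o (u \o h)) by exact: minimal_ideal_compI.
have gk_idem : (g \o (u \o h)) \o (g \o (u \o h)) = g \o (u \o h).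
  by rewrite compA -[_ \o _ \o g]compA kg -compA [u \o _]compA uu.
by rewrite -[in RHS](minimal_ideal_idem_rid Igk gk_idem Iu) [RHS]compA ug.
Qed.

End MinimalLeftIdeal.

Section IdempotentOfMinimalIdeal.
Variables (X : Type) (E I : set (X -> X)) (e : X -> X).
Hypotheses (minI : minimal_left_ideal E I) (Ie : I e) (ee : e \o e = e).

Lemma Lset_minimal_idealP f : Lset E e f <-> I f.
Proof.
split=> [[g Eg <-]|If]; first exact: (minimal_ideal_comp minI Eg Ie).
exists f; first exact: (minimal_ideal_sub minI If).
exact: (minimal_ideal_idem_rid minI Ie ee If).
Qed.

Lemma Gset_minimal_ideal : Gset E e = [set g | I g /\ e \o g = g].
Proof.
apply/seteqP; split=> [_ [f /Lset_minimal_idealP If <-]|g [Ig eg]].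
  by split; [exact: (minimal_ideal_compI minI) | rewrite compA ee].
by exists g => //; apply/Lset_minimal_idealP.
Qed.

Lemma ginv_spec g : Gset E e g ->
  [/\ Gset E e (ginv (Gset E e) e g),
      ginv (Gset E e) e g \o g = e & g \o ginv (Gset E e) e g = e].
Proof.
move=> Gg.
have [Ig eg] : I g /\ e \o g = g by move: Gg; rewrite Gset_minimal_ideal.
have [k [Ik ek kg gk]] := idem_group_inverse minI Ie ee Ig eg.
have [|Gk [kg' gk']] := @epsilon_spec _ (inhabits g)
  (fun h => Gset E e h /\ h \o g = e /\ g \o h = e); last by split.
by exists k; rewrite Gset_minimal_ideal.
Qed.

(* The normal inverse of [f] is its inverse in the group [v I], where
   [v = f h] for some [h] with [h f = e]. *)
Lemma ninv_spec f : I f ->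
  let w := ninv (Lset E e) f in
  [/\ Lset E e w, f \o w \o f = f, w \o f \o w = w & f \o w = w \o f].
Proof.
move=> If /=.
have [h Ih hf] := minimal_ideal_solve minI If Ie.
have fe : f \o e = f by apply: (minimal_ideal_idem_rid minI).
have Iv : I (f \o h) by exact: (minimal_ideal_compI minI).
have vv : (f \o h) \o (f \o h) = f \o h.
  by rewrite compA -[_ \o h \o f]compA hf fe.
have vf : (f \o h) \o f = f by rewrite -compA hf fe.
have [k [Ik vk kf fk]] := idem_group_inverse minI Iv vv If vf.
have [|? [? [? ?]]] := @epsilon_spec _ (inhabits f)
  (fun g => Lset E e g /\ f \o g \o f = f /\ g \o f \o g = g /\
            f \o g = g \o f); last by split.
exists k; split; first exact/Lset_minimal_idealP.
by rewrite fk kf vf vk.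
Qed.

Lemma nzero_spec f : I f ->
  let u := nzero (Lset E e) f in [/\ I u, u \o u = u & u \o f = f].
Proof.
move=> If /=; have [Lw fwf wfw fw] := ninv_spec If.
have /Lset_minimal_idealP Iw := Lw.
rewrite /nzero; split; first exact: (minimal_ideal_compI minI).
  by rewrite compA wfw.
by rewrite -fw.
Qed.

Lemma stab_ginv_comp f1 f2 x : I f1 -> I f2 -> e x = x ->
  stab (Gset E e) x (ginv (Gset E e) e (e \o f1) \o f2) <->
  e (f1 x) = e (f2 x).
Proof.
move=> If1 If2 ex.
have Gef1 : Gset E e (e \o f1).
  rewrite Gset_minimal_ideal; split; last by rewrite compA ee.
  exact: (minimal_ideal_compI minI).
have [Gk kef efk] := ginv_spec Gef1.
set k := ginv _ _ _ in Gk kef efk *.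
have [Ik ek] : I k /\ e \o k = k by move: Gk; rewrite Gset_minimal_ideal.
have ke : k \o e = k by apply: (minimal_ideal_idem_rid minI).
split=> [[_ kx]|ef12].
  by rewrite -{1}kx; exact: (congr1 (@^~ (f2 x)) efk).
split.
  rewrite Gset_minimal_ideal; split; last by rewrite compA ek.
  exact: (minimal_ideal_compI minI).
rewrite /= -ke /= -ef12 -[in RHS]ex.
exact: (congr1 (@^~ x) kef).
Qed.

Lemma eval_eq_of_nzero_eq f1 f2 z : I f1 -> I f2 ->
  nzero (Lset E e) f1 = nzero (Lset E e) f2 -> e (f1 z) = e (f2 z) ->
  f1 z = f2 z.
Proof.
move=> If1 If2 u12 ef12.
have [_ _ /(congr1 (@^~ z)) /= <-] := nzero_spec If1.
have [Iu2 _ /(congr1 (@^~ z)) /= <-] := nzero_spec If2.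
have u2e : nzero (Lset E e) f2 \o e = nzero (Lset E e) f2.
  exact: (minimal_ideal_idem_rid minI).
by rewrite u12 -u2e /= ef12.
Qed.

Lemma nzero_eq_of_separates f1 f2 z : I f1 -> I f2 ->
  separates_idempotents (Lset E e) (f1 z) -> f1 z = f2 z ->
  nzero (Lset E e) f1 = nzero (Lset E e) f2.
Proof.
move=> If1 If2 sep f12.
have [Iu1 u1u1 /(congr1 (@^~ z)) /= u1f1] := nzero_spec If1.
have [Iu2 u2u2 /(congr1 (@^~ z)) /= u2f2] := nzero_spec If2.
by apply: sep; rewrite ?Lset_minimal_idealP // u1f1 {2}f12 u2f2.
Qed.

End IdempotentOfMinimalIdeal.

Section RotationFactor.
Variables (T : zmodType) (X : topologicalType) (s : T -> X -> X).
Variables (Xeq : topologicalZmodType) (pi : X -> Xeq) (chi : T -> Xeq).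
Hypotheses (Xeq_T2 : hausdorff_space Xeq) (pi_cont : continuous pi).
Hypothesis pi_s : forall t x, pi (s t x) = pi x + chi t.

(* The maps [g] with [pi (g y) - pi (g y0) = pi y - pi y0] form a closed set
   of [{ptws X -> X}] containing every rotation [s t]. *)
Lemma ellis_displacement_const f y0 y : ellis s f ->
  pi (f y) - pi y = pi (f y0) - pi y0.
Proof.
move=> Ef.
pose D (g : {ptws X -> X}) := pi (g y) - pi (g y0).
have ev_cont z : continuous (fun g : {ptws X -> X} => pi (g z)).
  move=> g; apply: (@continuous_comp _ _ _ (fun g : {ptws X -> X} => g z) pi).
    exact: (@proj_continuous X (fun _ => X) z).
  exact: pi_cont.
have D_cont : continuous D.
  move=> g; apply: (@continuous_comp _ _ _
    (fun g : {ptws X -> X} => (pi (g y), pi (g y0))) (fun z => z.1 - z.2)).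
    exact: cvg_pair (ev_cont y g) (ev_cont y0 g).
  exact: sub_continuous.
have D_closed : closed (D @^-1` [set pi y - pi y0]).
  apply: preimage_closed => [g _|]; first exact: D_cont.
  exact/accessible_closed_set1/hausdorff_accessible.
have sD : range s `<=` D @^-1` [set pi y - pi y0].
  by move=> _ [t _ <-]; rewrite /D /= !pi_s opprD addrACA subrr addr0.
have := (@closureS {ptws X -> X} _ _ sD) f Ef.
rewrite -(closure_id _).1 // /D /= => Df.
rewrite -[pi (f y)](subrK (pi (f y0))) Df.
by rewrite addrAC (addrAC (pi y)) subrr add0r addrC.
Qed.

Lemma ellis_pitildeE f y : ellis s f -> pitilde pi f = pi (f y) - pi y.
Proof.
move=> Ef; symmetry.
apply: (epsilon_spec (inhabits (0 : Xeq))
  (fun z => forall y, pi (f y) - pi y = z)).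
by exists (pi (f y) - pi y) => y'; exact: ellis_displacement_const.
Qed.

Lemma ellis_pitilde_fibre f x xi : ellis s f ->
  pitilde pi f = xi - pi x -> pi (f x) = xi.
Proof. by move=> Ef; rewrite (ellis_pitildeE x Ef) => /addIr. Qed.

End RotationFactor.

Theorem mainTheorem7 (T : zmodType) (X : topologicalType) (s : T -> X -> X)
  (Xeq : topologicalZmodType) (pi : X -> Xeq) (e : X -> X)
  (x : X) (xi : Xeq) (f1 f2 : X -> X) :
  hausdorff_space X -> compact [set: X] ->
  continuous_action s -> minimal_action s -> non_distal s ->
  max_eq_factor s pi ->
  minimal_idempotent (ellis s) e ->
  (exists y, x = e y) ->
  Lset (ellis s) e f1 -> Lset (ellis s) e f2 ->
  (regular_point s pi xi ->
     (Rev pi (Lset (ellis s) e) x (xi - pi x) (f1, f2) <->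
      [/\ stab (Gset (ellis s) e) x
            (ginv (Gset (ellis s) e) e (e \o f1) \o f2),
          pitilde pi f1 = xi - pi x & pitilde pi f2 = xi - pi x]))
  /\
  ((forall y, pi y = xi -> separates_idempotents (Lset (ellis s) e) y) ->
     (Rev pi (Lset (ellis s) e) x (xi - pi x) (f1, f2) <->
      [/\ stab (Gset (ellis s) e) x
            (ginv (Gset (ellis s) e) e (e \o f1) \o f2),
          nzero (Lset (ellis s) e) f1 = nzero (Lset (ellis s) e) f2,
          pitilde pi f1 = xi - pi x & pitilde pi f2 = xi - pi x])).
Proof.
move=> _ _ _ _ _ [Xeq_T2 [_ [[chi [pi_cont [_ pi_s]]] _]]].
move=> [Ee [ee [I [minI Ie]]]] [y0 xE] L1 L2.
have ex : e x = x by rewrite xE; exact: (congr1 (@^~ y0) ee).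
have /(Lset_minimal_idealP minI Ie ee) If1 := L1.
have /(Lset_minimal_idealP minI Ie ee) If2 := L2.
have stabE := stab_ginv_comp minI Ie ee If1 If2 ex.
have fibre f : I f -> pitilde pi f = xi - pi x -> pi (f x) = xi.
  by move/(minimal_ideal_sub minI); apply: ellis_pitilde_fibre.
rewrite /Rev /=; split=> [reg|sep].
  split=> [[_ [_ [f12 [p1 p2]]]]|[/stabE ef12 p1 p2]].
    by split=> //; apply/stabE; rewrite f12.
  do 3!split=> //; apply: contrapT => f12; apply: reg.
  exists (f1 x), (f2 x).
  split; first exact: (fibre _ If1 p1).
  split; first exact: (fibre _ If2 p2).
  by split=> //; exists e.
split=> [[_ [_ [f12 [p1 p2]]]]|[/stabE ef12 u12 p1 p2]].
  split=> //; first by apply/stabE; rewrite f12.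
  have sep1 := sep _ (fibre _ If1 p1).
  exact: (nzero_eq_of_separates minI Ie ee If1 If2 sep1 f12).
do 3!split=> //.
exact: (eval_eq_of_nzero_eq minI Ie ee If1 If2 u12 ef12).
Qed.
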